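(* Let $\epsilon$ be an inversion sequence to which Algorithm A (described below) is applied, and let $\epsilon'$ be the resulting sequence. If $i$ is a transient occurrence of $p$, then $\epsilon'_{i+2}\neq\epsilon'_i$.
   Context: An inversion sequence of length $n$ is an integer sequence with $0\le\epsilon_i<i$ for all $i$. The reduction of an integer word replaces each occurrence of its $k$-th smallest distinct value by $k-1$; a consecutive pattern $\underline{p_1p_2p_3p_4}$ occurs in a sequence at position $i$ if the reduction of its entries in positions $i,\dots,i+3$ equals $p_1p_2p_3p_4$. Let $p=\underline{0102}$ and $q=\underline{0112}$. Algorithm A, on input an integer sequence $\mathrm{seq}=\epsilon_1\cdots\epsilon_n$: let $E_p$, $E_q$ be the sets of positions of occurrences of $p$, resp. $q$, in the input sequence; set $\mathrm{last}:=$ null. For $i=1,2,\dots,n$ in order: let $N_p,N_q$ be the sets of positions of occurrences of $p$, resp. $q$, in the current sequence. If $i-2\in E_p$: set $\mathrm{last}:=\mathrm{seq}[i]$ and $\mathrm{seq}[i]:=\mathrm{seq}[i-1]$. Else if $i-2\in E_q$: set $\mathrm{last}:=\mathrm{seq}[i]$ and $\mathrm{seq}[i]:=\mathrm{seq}[i-2]$. Else if $i-2\in N_p$ or $i-2\in N_q$: swap the values of $\mathrm{seq}[i]$ and $\mathrm{last}$. Output $\mathrm{seq}$. With $\epsilon$ the input and $\epsilon'$ the output: position $i$ is an original occurrence of $p$ if $\epsilon_i=\epsilon_{i+2}$ and $\epsilon_i<\epsilon_{i+1}<\epsilon_{i+3}$; it is a transient occurrence of $p$ if it is not an original occurrence of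 $p$ but $\epsilon'_i=\epsilon_{i+2}$ and $\epsilon'_i<\epsilon_{i+1}<\epsilon_{i+3}$. *)

From mathcomp Require Import all_boot.
Set Implicit Arguments. Unset Strict Implicit. Unset Printing Implicit Defensive.

(* Sequences eps_1 ... eps_n are stored as [seq nat] (0-based storage);
   positions are 1-based as in the paper: [entry s i] is eps_i. *)
Definition entry (s : seq nat) (i : nat) : nat := nth 0 s i.-1.
Definition set_entry (s : seq nat) (i v : nat) : seq nat := set_nth 0 s i.-1 v.

Definition inversion_seq (s : seq nat) : bool :=
  all (fun i => entry s i < i) (iota 1 (size s)).

Definition reduction (w : seq nat) : seq nat :=
  map (fun x => size (undup (filter (fun y => y < x) w))) w.

Definition occurs (pat s : seq nat) (i : nat) : bool :=
  [&& 1 <= i, i + 3 <= size s &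
      reduction [:: entry s i; entry s i.+1; entry s i.+2; entry s i.+3] == pat].

Definition pat_p : seq nat := [:: 0; 1; 0; 2].
Definition pat_q : seq nat := [:: 0; 1; 1; 2].

(* One iteration (index i) of Algorithm A.  [inp] is the input sequence (used
   for E_p, E_q); the state is (current seq, last), with last = None for null.
   N_p, N_q are computed on the current sequence at the start of the iteration.
   A swap with a null [last] never happens in actual runs; we leave the state
   unchanged in that case. *)
Definition algA_step (inp : seq nat) (st : seq nat * option nat) (i : nat)
  : seq nat * option nat :=
  let: (cur, last) := st in
  if occurs pat_p inp (i - 2) then
    (set_entry cur i (entry cur i.-1), Some (entry cur i))
  else if occurs pat_q inp (i - 2) then
    (set_entry cur i (entry cur (i - 2)), Some (entry cur i))
  else if occurs pat_p cur (i - 2) || occurs pat_q cur (i - 2) then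
    match last with
    | Some l => (set_entry cur i l, Some (entry cur i))
    | None => (cur, last)
    end
  else (cur, last).

Definition algA (s : seq nat) : seq nat :=
  (foldl (algA_step s) (s, None) (iota 1 (size s))).1.

Definition original_occ_p (e : seq nat) (i : nat) : Prop :=
  entry e i = entry e i.+2 /\ entry e i < entry e i.+1 < entry e i.+3.

Definition transient_occ_p (e e' : seq nat) (i : nat) : Prop :=
  ~ original_occ_p e i /\
  entry e' i = entry e i.+2 /\ entry e' i < entry e i.+1 < entry e i.+3.

From mathcomp Require Import all_boot.
From mathcomp Require Import zify.

(* Position j of the running sequence is written only at step j of Algorithm A.
   At a transient occurrence eps'_i <> eps_i, so step i did act and stored
   last := eps_i.  As eps'_i = eps_{i+2} < eps_{i+1}, neither p nor q occurs at
   i-1, in the input or in the current sequence, so step i+1 does nothing.  At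
   step i+2 the current sequence eps'_i eps_{i+1} eps_{i+2} eps_{i+3} is an
   occurrence of p, while the input has no occurrence of p (i is not original)
   nor of q (eps_{i+1} <> eps_{i+2}) at i; so last = eps_i is swapped into
   position i+2 and eps'_{i+2} = eps_i <> eps'_i. *)

Definition rank_in (w : seq nat) (x : nat) : nat :=
  size (undup [seq y <- w | y < x]).

Lemma reductionE w : reduction w = map (rank_in w) w.
Proof. by []. Qed.

Lemma rank_in_homo w : {in w &, {homo rank_in w : x y / x < y}}.
Proof.
move=> x y xw _ xy; rewrite /rank_in.
have uniq_x_below : uniq (x :: undup [seq z <- w | z < x]).
  by rewrite /= undup_uniq mem_undup mem_filter ltnn.
apply: uniq_leq_size uniq_x_below _ => z.
rewrite inE !mem_undup !mem_filter => /predU1P [-> | /andP [zx ->]].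
  by rewrite xy.
by rewrite (ltn_trans zx xy).
Qed.

Lemma rank_in_inj w : {in w &, injective (rank_in w)}.
Proof. exact/incn_inj_in/leq_mono_in/rank_in_homo. Qed.

Lemma rank_in_mono w : {in w &, {mono rank_in w : x y / x < y}}.
Proof. exact/leqW_mono_in/leq_mono_in/rank_in_homo. Qed.

Lemma reduction4_pat_p a b c d :
  (reduction [:: a; b; c; d] == pat_p) = [&& a == c, a < b & b < d].
Proof.
apply/idP/and3P => [| [/eqP <- ab bd]].
  rewrite reductionE => /eqP [ra rb rc rd].
  set w := [:: a; b; c; d] in ra rb rc rd.
  have [aw bw cw dw] : [/\ a \in w, b \in w, c \in w & d \in w].
    by rewrite !inE !eqxx !orbT.
  have mono := rank_in_mono w; have inj := rank_in_inj w.
  split.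
  - by apply/eqP; apply: inj; rewrite ?ra ?rc.
  - by rewrite -(mono a b) ?ra ?rb.
  - by rewrite -(mono b d) ?rb ?rd.
have ad := ltn_trans ab bd.
have [ba da db] : [/\ b < a = false, d < a = false & d < b = false].
  by rewrite ltnNge (ltnW ab) ltnNge (ltnW ad) ltnNge (ltnW bd).
rewrite reductionE.
set w := [:: a; b; a; d].
have ra : rank_in w a = 0 by rewrite /rank_in /= ltnn ba da.
have rb : rank_in w b = 1 by rewrite /rank_in /= ab ltnn db /= inE eqxx.
have rd : rank_in w d = 2.
  by rewrite /rank_in /= ad bd ltnn /= !inE eqxx orbT eq_sym (ltn_eqF ab).
by rewrite /w [map _ _]/= -/w ra rb rd.
Qed.

Lemma reduction4_pat_q a b c d :
  reduction [:: a; b; c; d] = pat_q -> b = c /\ c < d.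
Proof.
rewrite reductionE => -[_ rb rc rd].
set w := [:: a; b; c; d] in rb rc rd.
have [bw cw dw] : [/\ b \in w, c \in w & d \in w] by rewrite !inE !eqxx !orbT.
have mono := rank_in_mono w; have inj := rank_in_inj w.
by split; [apply: inj; rewrite ?rb ?rc | rewrite -(mono c d) ?rc ?rd].
Qed.

Lemma occurs_pE s m :
  occurs pat_p s m =
  [&& 1 <= m, m + 3 <= size s, entry s m == entry s m.+2,
      entry s m < entry s m.+1 & entry s m.+1 < entry s m.+3].
Proof. by rewrite /occurs reduction4_pat_p. Qed.

Lemma original_occ_pP s m :
  1 <= m -> m + 3 <= size s -> reflect (original_occ_p s m) (occurs pat_p s m).
Proof.
move=> m_pos m_bound; rewrite occurs_pE m_pos m_bound /=.
by apply: (iffP andP) => -[eq02 lt]; split=> //; apply/eqP.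
Qed.

Lemma occurs_q_inv s m :
  occurs pat_q s m ->
  [/\ 1 <= m, entry s m.+1 = entry s m.+2 & entry s m.+2 < entry s m.+3].
Proof. by case/and3P => m_pos _ /eqP/reduction4_pat_q[]; split. Qed.

Lemma occurs_pq_ascent s m :
  occurs pat_p s m || occurs pat_q s m -> 1 <= m /\ entry s m.+2 < entry s m.+3.
Proof.
case/orP; last by case/occurs_q_inv.
rewrite occurs_pE => /and5P[m_pos _ /eqP eq02 lt01 lt13].
by rewrite -eq02 (ltn_trans lt01 lt13).
Qed.

Lemma descent_no_occurs s j :
  entry s j.+1 <= entry s j ->
  ~~ (occurs pat_p s (j - 2) || occurs pat_q s (j - 2)).
Proof.
move=> descent; apply/negP => /occurs_pq_ascent[m_pos].
have -> : (j - 2).+2 = j by lia.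
by rewrite ltnNge descent.
Qed.

Lemma entry_set_entry s j k v :
  0 < j -> 0 < k -> entry (set_entry s j v) k = if k == j then v else entry s k.
Proof. by case: j k => [|j] [|k] // _ _; rewrite /entry /set_entry nth_set_nth. Qed.

Section AlgorithmStep.

Variable inp : seq nat.
Local Notation step := (algA_step inp).

Lemma algA_step_shape st j :
  step st j = st \/
  exists v, step st j = (set_entry st.1 j v, Some (entry st.1 j)).
Proof.
case: st => cur last; rewrite /algA_step.
case: ifP => _; first by right; eexists.
case: ifP => _; first by right; eexists.
case: ifP => _; last by left.
by case: last => [v|]; [right; exists v | left].
Qed.

Lemma algA_step_entry st j k :
  0 < j -> 0 < k -> k != j -> entry (step st j).1 k = entry st.1 k.
Proof.
move=> j_pos k_pos /negbTE kj.
by case: (algA_step_shape st j) => [-> | [v ->]] //=; rewrite entry_set_entry ?kj.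
Qed.

Lemma size_algA_step st j : size st.1 <= size (step st j).1.
Proof.
case: (algA_step_shape st j) => [-> // | [v ->]] /=.
by rewrite size_set_nth leq_maxr.
Qed.

Lemma algA_step_id st j :
  ~~ (occurs pat_p inp (j - 2) || occurs pat_q inp (j - 2)) ->
  ~~ (occurs pat_p st.1 (j - 2) || occurs pat_q st.1 (j - 2)) ->
  step st j = st.
Proof.
case: st => cur last; rewrite /algA_step !negb_or /=.
by move=> /andP[/negbTE-> /negbTE->] /andP[/negbTE-> /negbTE->].
Qed.

Lemma algA_step_swap st j v :
  ~~ occurs pat_p inp (j - 2) -> ~~ occurs pat_q inp (j - 2) ->
  occurs pat_p st.1 (j - 2) -> st.2 = Some v ->
  step st j = (set_entry st.1 j v, Some (entry st.1 j)).
Proof.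
case: st => cur last /= /negbTE E_p /negbTE E_q N_p ->.
by rewrite /algA_step E_p E_q N_p.
Qed.

End AlgorithmStep.

Definition algA_state (s : seq nat) (j : nat) : seq nat * option nat :=
  foldl (algA_step s) (s, None) (iota 1 j).

Lemma algA_stateS s j :
  algA_state s j.+1 = algA_step s (algA_state s j) j.+1.
Proof. by rewrite /algA_state -[X in iota _ X]addn1 iotaD foldl_cat add1n. Qed.

Lemma size_algA_state s j : size s <= size (algA_state s j).1.
Proof.
elim: j => [// | j IH]; rewrite algA_stateS.
exact: leq_trans IH (size_algA_step _ _ _).
Qed.

Lemma algA_state_future s j k :
  j < k -> entry (algA_state s j).1 k = entry s k.
Proof.
elim: j => [// | j IH] jk; rewrite algA_stateS algA_step_entry ?IH ?gtn_eqF //.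
- exact: ltnW.
- exact: leq_ltn_trans jk.
Qed.

Lemma algA_state_past s j n k :
  0 < k <= j -> j <= n -> entry (algA_state s n).1 k = entry (algA_state s j).1 k.
Proof.
case/andP=> k_pos kj; elim: n => [| n IH]; first by rewrite leqn0 => /eqP->.
rewrite leq_eqVlt => /predU1P[-> // | jn]; rewrite -(IH jn) algA_stateS.
by rewrite algA_step_entry // ltn_eqF // ltnS (leq_trans kj jn).
Qed.

Lemma algA_entry s j k :
  0 < k <= j -> j <= size s -> entry (algA s) k = entry (algA_state s j).1 k.
Proof. exact: algA_state_past. Qed.

Lemma algA_state_pred s j :
  0 < j -> algA_state s j = algA_step s (algA_state s j.-1) j.
Proof. by case: j => // j _; rewrite algA_stateS. Qed.

Section TransientOccurrence.

Variables (e : seq nat) (i : nat).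
Hypotheses (i_pos : 0 < i) (i_bound : i + 3 <= size e).
Hypothesis transient : transient_occ_p e (algA e) i.

Lemma transient_entry_changed : entry (algA e) i <> entry e i.
Proof.
by case: transient => not_orig conds eq0; apply: not_orig; rewrite /original_occ_p -eq0.
Qed.

Lemma algA_entry_transient : entry (algA e) i = entry (algA_state e i).1 i.
Proof. by apply: algA_entry; rewrite ?i_pos ?leqnn //; lia. Qed.

Lemma transient_descent : entry e i.+2 < entry e i.+1.
Proof. by case: transient => _ [<- /andP[]]. Qed.

Lemma transient_last : (algA_state e i).2 = Some (entry e i).
Proof.
have := algA_step_shape e (algA_state e i.-1) i.
rewrite -algA_state_pred // algA_state_future ?ltn_predL //.
case=> [same | [v ->] //]; case: transient_entry_changed.
by rewrite algA_entry_transient same algA_state_future ?ltn_predL.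
Qed.

Lemma transient_next_step_id : algA_state e i.+1 = algA_state e i.
Proof.
rewrite algA_stateS; apply: algA_step_id; apply: descent_no_occurs.
  exact: ltnW transient_descent.
by rewrite !algA_state_future // ltnW // transient_descent.
Qed.

Lemma transient_swap : entry (algA_state e i.+2).1 i.+2 = entry e i.
Proof.
have [not_orig [eq02 /andP[lt01 lt13]]] := transient.
have i_eq : i.+2 - 2 = i by rewrite subSS subSS subn0.
rewrite algA_stateS transient_next_step_id (algA_step_swap _ _ _ (entry e i)) ?i_eq.
- by rewrite /= entry_set_entry ?eqxx.
- by apply/negP => /(original_occ_pP _ _ i_pos i_bound)/not_orig.
- apply/negP => /occurs_q_inv[_ eq12 _].
  by move: transient_descent; rewrite eq12 ltnn.
- have [e1 e2 e3] : [/\ entry (algA_state e i).1 i.+1 = entry e i.+1,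
      entry (algA_state e i).1 i.+2 = entry e i.+2 &
      entry (algA_state e i).1 i.+3 = entry e i.+3].
    by split; apply: algA_state_future; lia.
  rewrite occurs_pE i_pos -algA_entry_transient e1 e2 e3 lt01 lt13 eq02 eqxx.
  by rewrite (leq_trans i_bound) ?size_algA_state.
- exact: transient_last.
Qed.

End TransientOccurrence.

Theorem lemma5 (e : seq nat) (i : nat) :
  inversion_seq e ->
  1 <= i -> i + 3 <= size e ->
  transient_occ_p e (algA e) i ->
  entry (algA e) i.+2 <> entry (algA e) i.
Proof.
move=> _ i_pos i_bound transient.
have algA_entry_swapped : entry (algA e) i.+2 = entry e i.
  by rewrite (algA_entry _ i.+2) ?leqnn ?transient_swap //; lia.
by rewrite algA_entry_swapped => /esym; apply: transient_entry_changed.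
Qed.
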